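(* Let $K$ be a field, $S=K[x_1,\ldots,x_n]$, $I\subset S$ a monomial ideal with $I\ne S$ and $G(I)=\{x^{a_1},\ldots,x^{a_m}\}$, let $T$ be a polynomial ring over $K$, and let $L_1,\ldots,L_m$ be arbitrary monomial ideals of $T$. Then the complex $\mathbb{F}^*$ of $L_1,\ldots,L_m$ induced by $I$ (defined in the context) is a well-defined complex of $T$-modules, and $H_0(\mathbb{F}^* )=T/L$ where $L=\sum_{j=1}^mL_j$.
   Context: For $a\in\mathbb{N}^n$, $x^a=x_1^{a(1)}\cdots x_n^{a(n)}$; $G(I)$ is the minimal monomial generating set. Let $0\to F_p\to\cdots\to F_1\to F_0\to S/I\to 0$ be the $\mathbb{Z}^n$-graded minimal free resolution of $S/I$ with differential $\partial$, where $F_0=S$ with basis $f_{01}$ of degree $0$, and $F_i=\bigoplus_{j=1}^{\beta_i}Sf_{ij}$ with $f_{ij}$ homogeneous of multidegree $a_{ij}\in\mathbb{N}^n$; here $\beta_1=m$, $a_{1j}=a_j$ and $\partial(f_{1j})=x^{a_j}f_{01}$. Write $\partial(f_{ij})=\sum_k\lambda^{(i)}_{kj}x^{a_{ij}-a_{i-1,k}}f_{i-1,k}$ with $\lambda^{(i)}_{kj}\in K$, where $\lambda^{(i)}_{kj}=0$ whenever $a_{ij}-a_{i-1,k}\notin\mathbb{N}^n$; the matrices $\lambda^{(i)}=(\lambda^{(i)}_{kj})\in K^{\beta_{i-1}\times\beta_i}$ are the scalar matrices ($\lambda^{(1)}=(1,\ldots,1)$). The complex $\mathbb{F}^*$ is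 defined by $F^*_0=T$, $F^*_i=\bigoplus_{j=1}^{\beta_i}L_{ij}$ for $1\le i\le p$, where $L_{1j}=L_j$ and, for $i\ge2$, $L_{ij}=\bigcap_{k:\lambda^{(i)}_{kj}\neq0}L_{i-1,k}$; the map $\partial^*:F^*_i\to F^*_{i-1}$ sends a column vector $u=(u_1,\ldots,u_{\beta_i})^T$, $u_j\in L_{ij}$, to $\lambda^{(i)}u$. *)

From HB Require Import structures.
From mathcomp Require Import all_boot all_algebra.
From mathcomp Require Import mpoly.
Set Implicit Arguments. Unset Strict Implicit. Unset Printing Implicit Defensive.
Import GRing.Theory.
Local Open Scope ring_scope.

Definition is_ideal (T : comNzRingType) (L : T -> Prop) : Prop :=
  [/\ L 0, (forall p q, L p -> L q -> L (p + q)) & (forall c p, L p -> L (c * p))].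

Definition monomial_ideal (K : fieldType) (r : nat) (L : {mpoly K[r]} -> Prop) : Prop :=
  is_ideal L /\
  forall p, L p -> exists s : seq ({mpoly K[r]} * 'X_{1..r}),
      (forall cm, cm \in s -> L 'X_[cm.2]) /\ p = \sum_(cm <- s) cm.1 * 'X_[cm.2].

Definition gen_ideal (K : fieldType) (n m : nat) (g : 'I_m -> 'X_{1..n})
    (f : {mpoly K[n]}) : Prop :=
  exists c : 'I_m -> {mpoly K[n]}, f = \sum_(j < m) c j * 'X_[g j].

Definition min_mon_gens (K : fieldType) (n m : nat) (I : {mpoly K[n]} -> Prop)
    (g : 'I_m -> 'X_{1..n}) : Prop :=
  (forall f, I f <-> gen_ideal g f) /\
  (forall j j' : 'I_m, j != j' -> ~~ lem (g j) (g j')).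

(* Matrix of the differential d_{i+1} : F_{i+1} -> F_i of a Z^n-graded free
   complex with basis multidegrees a i and scalar matrix lam i = lambda^(i+1):
   entry (k,j) is lambda_{kj} x^(a_{i+1,j} - a_{i,k}). *)
Definition resmx (K : fieldType) (n : nat) (beta : nat -> nat)
    (a : forall i, 'I_(beta i) -> 'X_{1..n})
    (lam : forall i, 'M[K]_(beta i, beta i.+1)) (i : nat)
    : 'M[{mpoly K[n]}]_(beta i, beta i.+1) :=
  \matrix_(k, j) ((lam i k j)%:MP * 'X_[(a i.+1 j - a i k)%MM]).

(* (beta, a, lam) is the Z^n-graded minimal free resolution
   0 -> F_p -> ... -> F_1 -> F_0 -> S/I -> 0, with F_i = S^(beta i),
   basis f_{ij} of multidegree a i j, and d(f_{i+1,j}) = sum_k lam i k j x^(..) f_{ik}. *)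
Definition is_min_graded_res (K : fieldType) (n : nat) (I : {mpoly K[n]} -> Prop)
    (p : nat) (beta : nat -> nat) (a : forall i, 'I_(beta i) -> 'X_{1..n})
    (lam : forall i, 'M[K]_(beta i, beta i.+1)) : Prop :=
  [/\ beta 0 = 1%N, (forall k, a 0%N k = 0%MM) & (forall i, (p < i)%N -> beta i = 0%N)] /\
  (* homogeneity: lambda_kj = 0 unless a_{i-1,k} <= a_{ij} *)
  (forall i k j, ~~ lem (a i k) (a i.+1 j) -> lam i k j = 0) /\
  (* minimality: the differentials have entries in (x_1,...,x_n) *)
  (forall i k j, lam i k j != 0 -> a i k != a i.+1 j) /\
  (* augmentation: F_1 -> F_0 = S -> S/I -> 0 exact *)
  (forall f, I f <-> exists v : 'cV_(beta 1%N),
               forall k, (resmx a lam 0 *m v) k 0 = f) /\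
  (forall i, resmx a lam i *m resmx a lam i.+1 = 0) /\
  (* exact at F_i, i >= 1 (including injectivity of d_p) *)
  (forall i (v : 'cV_(beta i.+1)), resmx a lam i *m v = 0 ->
      exists w : 'cV_(beta i.+2), v = resmx a lam i.+1 *m w).

(* The ideals L_{i+1,j} of T: L_{1j} = Lg j, and
   L_{i+2,j} = intersection of L_{i+1,k} over k with lambda^(i+2)_{kj} != 0. *)
Fixpoint Lc (K : fieldType) (r : nat) (beta : nat -> nat)
    (lam : forall i, 'M[K]_(beta i, beta i.+1))
    (Lg : 'I_(beta 1%N) -> {mpoly K[r]} -> Prop) (i : nat)
    : 'I_(beta i.+1) -> {mpoly K[r]} -> Prop :=
  match i return 'I_(beta i.+1) -> {mpoly K[r]} -> Prop with
  | 0 => Lg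
  | i'.+1 => fun j f => forall k : 'I_(beta i'.+1), lam i'.+1 k j != 0 ->
                          @Lc K r beta lam Lg i' k f
  end.

(* F*_i as a subset of T^(beta i): F*_0 = T, F*_i = (+)_j L_{ij}. *)
Definition Fstar (K : fieldType) (r : nat) (beta : nat -> nat)
    (lam : forall i, 'M[K]_(beta i, beta i.+1))
    (Lg : 'I_(beta 1%N) -> {mpoly K[r]} -> Prop) (i : nat)
    : 'cV[{mpoly K[r]}]_(beta i) -> Prop :=
  match i return 'cV[{mpoly K[r]}]_(beta i) -> Prop with
  | 0 => fun _ => True
  | i'.+1 => fun u => forall j, @Lc K r beta lam Lg i' j (u j 0)
  end.

Definition dstar (K : fieldType) (r : nat) (beta : nat -> nat)
    (lam : forall i, 'M[K]_(beta i, beta i.+1)) (i : nat)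
    (u : 'cV[{mpoly K[r]}]_(beta i.+1)) : 'cV[{mpoly K[r]}]_(beta i) :=
  map_mx (fun c : K => c%:MP) (lam i) *m u.

Definition sum_ideals (T : comNzRingType) (m : nat) (Lg : 'I_m -> T -> Prop) (f : T) : Prop :=
  exists h : 'I_m -> T, (forall j, Lg j (h j)) /\ f = \sum_(j < m) h j.

Arguments Fstar {K r beta} lam Lg i _.
Arguments dstar {K r beta} lam i u.
Arguments Lc {K r beta} lam Lg i _ _.

From HB Require Import structures.
From mathcomp Require Import all_boot all_algebra.
From mathcomp Require Import mpoly.
Import GRing.Theory.
Local Open Scope ring_scope.

(* Every L_{ij} is an intersection of the L_j, hence an ideal, and d* maps
   L_{i+1,k} into L_{ij} whenever lambda_{jk} != 0, so F* is a complex of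
   submodules provided lambda^(i) lambda^(i+1) = 0.  That scalar identity is
   read off the graded complex F: by homogeneity every summand of the (k,l)
   entry of d_i d_{i+1} is a multiple of the same monomial
   x^(a_{i+1,l} - a_{i-1,k}), whose coefficient is (lambda^(i) lambda^(i+1))_{kl}.
   Finally lambda^(1) = (1, ..., 1), so the image of d*_1 is L_1 + ... + L_m. *)

Lemma subm_telescope {n : nat} {x y z : 'X_{1..n}} :
  (x <= y)%MM -> (y <= z)%MM -> (y - x + (z - y))%MM = (z - x)%MM.
Proof. by move=> lxy lyz; rewrite addmC addmBA // submK. Qed.

Lemma ideal_sum (T : comNzRingType) (L : T -> Prop) (I : finType) (F : I -> T) :
  is_ideal L -> (forall x, L (F x)) -> L (\sum_x F x).
Proof. by move=> [L0 LD _] LF; elim/big_rec: _ => // x y _; apply: LD. Qed.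

Section GradedComplex.

Context {K : fieldType} {n : nat} {beta : nat -> nat}.
Context {a : forall i, 'I_(beta i) -> 'X_{1..n}}.
Context {lam : forall i, 'M[K]_(beta i, beta i.+1)}.
Hypothesis lam_homog : forall i k j, ~~ (a i k <= a i.+1 j)%MM -> lam i k j = 0.

Lemma lam_neq0_lem {i k j} : lam i k j != 0 -> (a i k <= a i.+1 j)%MM.
Proof. by apply: contraNT => /lam_homog ->; rewrite eqxx. Qed.

Lemma mulmx_resmx i :
  resmx a lam i *m resmx a lam i.+1 =
  \matrix_(k, l) (((lam i *m lam i.+1) k l)%:MP * 'X_[a i.+2 l - a i k]).
Proof.
apply/matrixP=> k l; rewrite !mxE rmorph_sum mulr_suml.
apply: eq_bigr => j _; rewrite !mxE rmorphM.
have [->|nz1] := eqVneq (lam i k j) 0; first by rewrite !(mpolyC0, mul0r).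
have [->|nz2] := eqVneq (lam i.+1 j l) 0; first by rewrite !(mpolyC0, mulr0, mul0r).
rewrite -(subm_telescope (lam_neq0_lem nz1) (lam_neq0_lem nz2)) mpolyXD.
by rewrite -!mulrA; congr (_ * _); rewrite mulrA [_ * _%:MP]mulrC -mulrA.
Qed.

Lemma lam_mulmx_eq0 i :
  resmx a lam i *m resmx a lam i.+1 = 0 -> lam i *m lam i.+1 = 0.
Proof.
rewrite mulmx_resmx => /matrixP dd0; apply/matrixP=> k l.
have := congr1 (mcoeff (a i.+2 l - a i k)%MM) (dd0 k l).
by rewrite !mxE mcoeffCM mcoeffX eqxx mulr1 mcoeff0.
Qed.

End GradedComplex.

Section InducedComplex.

Context {K : fieldType} {r : nat} {beta : nat -> nat}.
Variable lam : forall i, 'M[K]_(beta i, beta i.+1).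
Context {Lg : 'I_(beta 1%N) -> {mpoly K[r]} -> Prop}.
Hypothesis Lg_ideal : forall j, is_ideal (Lg j).

Lemma Lc_ideal i j : is_ideal (Lc lam Lg i j).
Proof.
elim: i j => [|i IH] j /=; first exact: Lg_ideal.
split=> [k _|f g Lc_f Lc_g k nz|c f Lc_f k nz]; have [L0 LD LM] := IH k.
- exact: L0.
- by apply: LD; [apply: Lc_f | apply: Lc_g].
- by apply: LM; apply: Lc_f.
Qed.

Lemma Fstar_submodule i :
  [/\ Fstar lam Lg i 0,
      forall u v, Fstar lam Lg i u -> Fstar lam Lg i v -> Fstar lam Lg i (u + v)
    & forall (c : {mpoly K[r]}) u, Fstar lam Lg i u -> Fstar lam Lg i (c *: u)].
Proof.
case: i => [|i] //=; split=> [j|u v Fu Fv j|c u Fu j];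
  rewrite !mxE; have [L0 LD LM] := Lc_ideal i j.
- exact: L0.
- exact: LD.
- exact: LM.
Qed.

Lemma dstar_Fstar i u : Fstar lam Lg i.+1 u -> Fstar lam Lg i (dstar lam i u).
Proof.
case: i u => [|i] u //= Fu j; rewrite mxE; apply: ideal_sum; first exact: Lc_ideal.
move=> k; rewrite mxE; have [L0 _ LM] := Lc_ideal i j.
have [->|nz] := eqVneq (lam i.+1 j k) 0; first by rewrite mpolyC0 mul0r.
by apply: LM; apply: Fu.
Qed.

Lemma dstar_dstar i (u : 'cV[{mpoly K[r]}]_(beta i.+2)) :
  lam i *m lam i.+1 = 0 -> dstar lam i (dstar lam i.+1 u) = 0.
Proof. by move=> lam0; rewrite /dstar mulmxA -map_mxM lam0 map_mx0 mul0mx. Qed.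

Hypothesis lam0_ones : forall k j, lam 0%N k j = 1.

Lemma dstar0E (u : 'cV[{mpoly K[r]}]_(beta 1%N)) k : dstar lam 0 u k 0 = \sum_j u j 0.
Proof. by rewrite mxE; apply: eq_bigr => j _; rewrite mxE lam0_ones mpolyC1 mul1r. Qed.

Lemma image_dstar0 f : (0 < beta 0)%N ->
  (exists u, Fstar lam Lg 1%N u /\ forall k, dstar lam 0 u k 0 = f)
  <-> sum_ideals Lg f.
Proof.
move=> beta0_gt0; split=> [ [u [Fu uf]] | [h [Lh ->]]].
- exists (fun j => u j 0); split=> //.
  by rewrite -(uf (Ordinal beta0_gt0)) dstar0E.
- exists (\col_j h j); split=> [j | k]; first by rewrite mxE.
  by rewrite dstar0E; apply: eq_bigr => j _; rewrite mxE.
Qed.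

End InducedComplex.

Theorem lemma1p2 (K : fieldType) (n : nat) (I : {mpoly K[n]} -> Prop)
    (p : nat) (beta : nat -> nat) (a : forall i, 'I_(beta i) -> 'X_{1..n})
    (lam : forall i, 'M[K]_(beta i, beta i.+1))
    (r : nat) (Lg : 'I_(beta 1%N) -> {mpoly K[r]} -> Prop) :
  monomial_ideal I -> ~ I 1 ->
  min_mon_gens I (a 1%N) ->
  is_min_graded_res I p a lam ->
  (forall k j, lam 0%N k j = 1) ->
  (forall j, monomial_ideal (Lg j)) ->
      (forall i, Fstar lam Lg i 0 /\
         (forall u v, Fstar lam Lg i u -> Fstar lam Lg i v -> Fstar lam Lg i (u + v)) /\
         (forall (c : {mpoly K[r]}) u, Fstar lam Lg i u -> Fstar lam Lg i (c *: u))) /\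
      (forall i u, Fstar lam Lg i.+1 u -> Fstar lam Lg i (dstar lam i u)) /\
      (forall i u, Fstar lam Lg i.+2 u -> dstar lam i (dstar lam i.+1 u) = 0) /\
      (forall f : {mpoly K[r]},
         (exists u, Fstar lam Lg 1%N u /\ forall k, (dstar lam 0 u) k 0 = f)
         <-> sum_ideals Lg f).
Proof.
move=> _ _ _ [[beta0 _ _] [lam_homog [_ [_ [complex _]]]]] lam0_ones Lg_monomial.
have Lg_ideal j : is_ideal (Lg j) by case: (Lg_monomial j).
split; [|split; [|split]].
- by move=> i; case: (Fstar_submodule lam Lg_ideal i).
- by move=> i u; apply: (dstar_Fstar lam Lg_ideal i u).
- by move=> i u _; apply/dstar_dstar/(lam_mulmx_eq0 lam_homog i).
- by move=> f; apply: image_dstar0; rewrite ?beta0.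
Qed.
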